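(* Let $X,Y\subset\mathbf{N}$ be two $n$-element sets, $f:X\to Y$ a bijection, and $\pi\in S_n$ the permutation order-isomorphic to $f$. Suppose $\pi\in H_k^+\cup H_k^-$ for some $k\in\mathbf{N}$. Then every partition of $X$ into intervals $J_1<J_2<\dots<J_r$ can be refined by a partition of $X$ into intervals $I_1<I_2<\dots<I_s$ such that $s\le r+(k-1)(r-1)$ and each image $f(I_i)$ is an interval in $Y$. Similarly, every partition of $Y$ into $r$ intervals can be refined by a partition of $Y$ into at most $r+(k-1)(r-1)$ intervals each of which is mapped by $f^{-1}$ onto an interval in $X$.
   Context: For $X=\{x_1<\dots<x_n\}$ and $Y=\{y_1<\dots<y_n\}$, the permutation $\pi\in S_n$ order-isomorphic to a bijection $f:X\to Y$ is defined by $\pi(i)=j\Leftrightarrow f(x_i)=y_j$. An interval in $X$ is a set $\{x_i,x_{i+1},\dots,x_j\}$ with $1\le i\le j\le n$; for sets $A<B$ means $a<b$ for all $a\in A,b\in B$. For $\sigma\in S_n,\tau\in S_m$, $\sigma\oplus\tau\in S_{n+m}$ equals $\sigma(i)$ at $i\le n$ and $n+\tau(i-n)$ at $i>n$; $\sigma\ominus\tau$ equals $m+\sigma(i)$ at $i\le n$ and $\tau(i-n)$ at $i>n$. A permutation is up-indecomposable (down-indecomposable) if it is not $\sigma\oplus\tau$ (not $\sigma\ominus\tau$) with $\sigma,\tau$ nonempty. Every $\pi$ has a unique decomposition $\pi=\sigma_1\oplus\dots\oplus\sigma_r$ into up-indecomposable blocks; $h^+(\pi)$ is the maximum block length; $h^-$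 is defined analogously with $\ominus$. $H_k^+=\{\pi:h^+(\pi)<k\}$, $H_k^-=\{\pi:h^-(\pi)<k\}$. *)

From mathcomp Require Import all_boot.
Set Implicit Arguments. Unset Strict Implicit. Unset Printing Implicit Defensive.

(* A finite set X = {x_1 < ... < x_n} of naturals is represented by its
   strictly increasing enumeration (a seq nat sorted by ltn).
   Permutations of [n] are represented as words (one-line notation) with
   values 1..n, i.e. pi = [:: pi(1); ...; pi(n)]. *)

Definition is_perm (s : seq nat) : bool := perm_eq s (iota 1 (size s)).

Definition dsum (s t : seq nat) : seq nat := s ++ map (addn (size s)) t.
Definition ssum (s t : seq nat) : seq nat := map (addn (size t)) s ++ t.

Definition up_indecomposable (s : seq nat) : Prop :=
  ~ exists s1 s2, [/\ is_perm s1, is_perm s2, s1 != [::], s2 != [::] & s = dsum s1 s2].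
Definition down_indecomposable (s : seq nat) : Prop :=
  ~ exists s1 s2, [/\ is_perm s1, is_perm s2, s1 != [::], s2 != [::] & s = ssum s1 s2].

Definition up_decomposition (pi : seq nat) (bs : seq (seq nat)) : Prop :=
  [/\ all is_perm bs, all (fun b => b != [::]) bs,
      (forall b, b \in bs -> up_indecomposable b) &
      pi = foldr dsum [::] bs].
Definition down_decomposition (pi : seq nat) (bs : seq (seq nat)) : Prop :=
  [/\ all is_perm bs, all (fun b => b != [::]) bs,
      (forall b, b \in bs -> down_indecomposable b) &
      pi = foldr ssum [::] bs].

(* pi \in H_k^+  <->  h^+(pi) < k, h^+ = max block length of the decomposition *)
Definition in_Hplus (k : nat) (pi : seq nat) : Prop :=
  exists bs, up_decomposition pi bs /\ \max_(b <- bs) size b < k.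
Definition in_Hminus (k : nat) (pi : seq nat) : Prop :=
  exists bs, down_decomposition pi bs /\ \max_(b <- bs) size b < k.

(* The permutation order-isomorphic to f : X -> Y (1-indexed):
   pi(i) = j  <->  f(x_i) = y_j. *)
Definition perm_of (X Y : seq nat) (f : nat -> nat) : seq nat :=
  [seq (index (f x) Y).+1 | x <- X].

Definition is_interval (X A : seq nat) : Prop :=
  exists a b, a < b <= size X /\ perm_eq A (drop a (take b X)).

Definition interval_partition (X : seq nat) (Js : seq (seq nat)) : bool :=
  all (fun J => J != [::]) Js && (flatten Js == X).

Definition refines (Is Js : seq (seq nat)) : Prop :=
  forall I, I \in Is -> exists2 J, J \in Js & {subset I <= J}.

From mathcomp Require Import all_boot zify.

Set Implicit Arguments.
Unset Strict Implicit.
Unset Printing Implicit Defensive.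

(* Cutting pi into its up-indecomposable (resp. down-indecomposable) blocks
   cuts X into consecutive intervals A_1 < ... < A_m, each of size < k, which f
   maps onto intervals B_1 < ... < B_m of Y (in reverse order in the
   down-indecomposable case).  Hence f maps a union of consecutive A_i onto an
   interval of Y, and the preimage of a union of consecutive B_i is an interval
   of X.  Refine J_1 < ... < J_r by keeping, inside each J_j, the union of the
   blocks contained in J_j as one piece, and splitting the blocks that J_j only
   meets partially into singletons.  Each of the r - 1 boundaries between the
   J_j cuts at most one block, which yields at most k - 1 singletons, so there
   are at most r + (k - 1)(r - 1) pieces.  The same argument with the blocks
   B_i of Y gives the second statement. *)

Lemma infix_map (T1 T2 : eqType) (g : T1 -> T2) (s1 s2 : seq T1) :
  infix s1 s2 -> infix (map g s1) (map g s2).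
Proof. by case/infixP=> [s [s' ->]]; rewrite !map_cat infix_infix. Qed.

Lemma infix_mapP (T1 T2 : eqType) (g : T1 -> T2) (t : seq T2) (s : seq T1) :
  infix t (map g s) -> exists2 s1, infix s1 s & t = map g s1.
Proof.
case/infixP=> [u [u' e]]; exists (take (size t) (drop (size u) s)).
  by apply: (@infix_trans _ (drop (size u) s)); [exact: infix_take | exact: infix_drop].
by rewrite map_take map_drop e drop_size_cat // take_size_cat.
Qed.

Lemma infix_flatten (T : eqType) (ss1 ss2 : seq (seq T)) :
  infix ss1 ss2 -> infix (flatten ss1) (flatten ss2).
Proof. by case/infixP=> [s [s' ->]]; rewrite !flatten_cat infix_infix. Qed.

Lemma cat_eq_cat (T : Type) (s1 s2 t1 t2 : seq T) : s1 ++ s2 = t1 ++ t2 ->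
  (exists u, t1 = s1 ++ u /\ s2 = u ++ t2) \/ (exists u, s1 = t1 ++ u /\ t2 = u ++ s2).
Proof.
wlog le : s1 s2 t1 t2 / size s1 <= size t1 => [hw e|e].
  have [le|/ltnW le] := leqP (size s1) (size t1); first exact: hw.
  by case: (hw _ _ _ _ le (esym e)) => ?; [right | left].
have t1E : t1 = s1 ++ drop (size s1) t1.
  by rewrite -{1}(cat_take_drop (size s1) t1) -(takel_cat t2 le) -e take_size_cat.
left; exists (drop (size s1) t1); split=> //.
by rewrite -(drop_size_cat s2 (erefl (size s1))) e {1}t1E -catA drop_size_cat.
Qed.

(* [Bm] is the block straddling the cut, if any; there is none when the cut
   falls between two blocks, in particular when [R1] is empty. *)
Lemma flatten_split (T : eqType) (Bs : seq (seq T)) (P R : seq T) : P ++ R = flatten Bs ->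
  exists Bs1 Bm Bs3 P2 R1, [/\ Bs = Bs1 ++ Bm ++ Bs3, P = flatten Bs1 ++ P2, R = R1 ++ flatten Bs3,
    flatten Bm = P2 ++ R1 & size Bm <= (R1 != [::])].
Proof.
elim: Bs P => [|B Bs IH] P /= e.
  by exists [::], [::], [::], [::], [::]; case: P e => [|? ?] //; case: R.
case: (cat_eq_cat e) => [[u [-> ->]] | [u [-> /esym/IH[Bs1 [Bm [Bs3 [P2 [R1 [-> -> -> ? ?]]]]]]]]].
  have [->|u0] := eqVneq u [::].
    by exists [:: P], [::], Bs, [::], [::]; rewrite /= !cats0.
  by exists [::], [:: P ++ u], Bs, P, u; rewrite /= cats0 u0.
by exists (B :: Bs1), Bm, Bs3, P2, R1; rewrite /= !catA.
Qed.

Lemma perm_eq_catr (T : eqType) (s1 s2 t1 t2 : seq T) :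
  perm_eq (s1 ++ s2) (t1 ++ t2) -> perm_eq s1 t1 -> perm_eq s2 t2.
Proof. by move=> p p1; rewrite -(perm_cat2l t1) (perm_trans _ p) // perm_cat // perm_sym. Qed.

Lemma is_interval_infix (W M : seq nat) : infix M W -> M != [::] -> is_interval W M.
Proof.
case/infixP=> [s [s' ->]] M0; exists (size s), (size s + size M); split.
  by rewrite -{1}[size s]addn0 ltn_add2l lt0n size_eq0 M0 !size_cat leq_add2l leq_addr.
by rewrite catA take_size_cat ?size_cat // drop_size_cat.
Qed.

Lemma is_interval_perm (W M N : seq nat) : perm_eq M N -> is_interval W N -> is_interval W M.
Proof. by move=> MN [a [b [ab NE]]]; exists a, b; split=> //; apply: perm_trans NE. Qed.

Definition singletons (s : seq nat) : seq (seq nat) := [seq [:: x] | x <- s].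

Definition nonnil1 (s : seq nat) : seq (seq nat) := if s is [::] then [::] else [:: s].

Lemma mem_nonnil1 (s I : seq nat) : I \in nonnil1 s -> I = s.
Proof. by case: s => //= x s; rewrite inE => /eqP. Qed.

Lemma interval_partition_cat (W1 W2 : seq nat) (Is1 Is2 : seq (seq nat)) :
  interval_partition W1 Is1 -> interval_partition W2 Is2 ->
  interval_partition (W1 ++ W2) (Is1 ++ Is2).
Proof.
by rewrite /interval_partition all_cat flatten_cat => /andP[-> /eqP->] /andP[-> /eqP->] /=.
Qed.

Lemma interval_partition_singletons (s : seq nat) : interval_partition s (singletons s).
Proof. by rewrite /interval_partition flatten_seq1 eqxx andbT; apply/allP=> _ /mapP[x _ ->]. Qed.

Lemma interval_partition_nonnil1 (s : seq nat) : interval_partition s (nonnil1 s).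
Proof. by case: s => // x s; rewrite /interval_partition /= cats0 eqxx. Qed.

Lemma interval_partition_nonnil (W : seq nat) (Is : seq (seq nat)) (I : seq nat) :
  interval_partition W Is -> I \in Is -> I != [::].
Proof. by case/andP=> /allP nonnil _ /nonnil. Qed.

Lemma interval_partition_mem (W : seq nat) (Is : seq (seq nat)) (I : seq nat) x :
  interval_partition W Is -> I \in Is -> x \in I -> x \in W.
Proof. by case/andP=> _ /eqP<- Is_I I_x; apply/flattenP; exists I. Qed.

Lemma refines_cons (J : seq nat) (Js Is1 Is2 : seq (seq nat)) :
  interval_partition J Is1 -> refines Is2 Js -> refines (Is1 ++ Is2) (J :: Js).
Proof.
move=> /andP[_ /eqP JE] ref I; rewrite mem_cat => /orP[I1 | /ref[J' J'Js IJ']].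
  by exists J; rewrite ?mem_head // -JE => x xI; apply/flattenP; exists I.
by exists J'; rewrite // inE J'Js orbT.
Qed.

Definition block_run (Bs : seq (seq nat)) (I : seq nat) : Prop :=
  exists2 Bs2, infix Bs2 Bs & I = flatten Bs2.

(* [S] is the tail of a block already cut by an earlier boundary: its elements
   can only become singletons, hence the extra [size S]. *)
Definition block_refinement (k : nat) (S : seq nat) (Bs Js Is : seq (seq nat)) : Prop :=
  [/\ interval_partition (S ++ flatten Bs) Is, refines Is Js,
      size Is <= size S + size Js + (k - 1) * (size Js - 1) &
      forall I, I \in Is -> (exists x, I = [:: x]) \/ block_run Bs I].

Lemma block_refinement_inside k (J S : seq nat) (Bs Js Is : seq (seq nat)) :
  block_refinement k S Bs Js Is -> block_refinement k (J ++ S) Bs (J :: Js) (singletons J ++ Is).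
Proof.
case=> part ref le runs; split.
- by rewrite -catA; apply: interval_partition_cat => //; exact: interval_partition_singletons.
- exact: refines_cons (interval_partition_singletons J) ref.
- have : (k - 1) * (size Js - 1) <= (k - 1) * size Js by rewrite leq_mul2l leq_subr orbT.
  rewrite !size_cat size_map /= subSS subn0; lia.
- move=> I; rewrite mem_cat => /orP[/mapP[x _ ->] | /runs //]; by left; exists x.
Qed.

Lemma block_refinement_cut k (S P2 R1 : seq nat) (Bs1 Bm Bs3 Js Is : seq (seq nat)) :
  (forall B : seq nat, B \in Bm -> size B < k) ->
  flatten Bm = P2 ++ R1 -> size Bm <= (R1 != [::]) ->
  flatten Js = R1 ++ flatten Bs3 -> block_refinement k R1 Bs3 Js Is ->
  block_refinement k S (Bs1 ++ Bm ++ Bs3) ((S ++ flatten Bs1 ++ P2) :: Js)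
    ((singletons S ++ nonnil1 (flatten Bs1) ++ singletons P2) ++ Is).
Proof.
move=> small BmE cut JsE [part ref le runs].
have JE : interval_partition (S ++ flatten Bs1 ++ P2)
    (singletons S ++ nonnil1 (flatten Bs1) ++ singletons P2).
  apply: interval_partition_cat; first exact: interval_partition_singletons.
  apply: interval_partition_cat; first exact: interval_partition_nonnil1.
  exact: interval_partition_singletons.
(* The block cut by the new boundary is paid for by its extra factor k - 1. *)
have cut_size : size (P2 ++ R1) + (k - 1) * (size Js - 1) <= (k - 1) * size Js.
  rewrite -BmE; case: Js JsE {ref le} => [|J Js] /= JsE.
    have R10 : R1 = [::] by case: R1 JsE {BmE cut part runs}.
    by move: cut; rewrite R10 leqn0 size_eq0 => /eqP->; rewrite muln0.
  rewrite subSS subn0 mulnS leq_add2r.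
  move: (leq_trans cut (leq_b1 _)); case: Bm small {BmE cut} => [|B [|B' Bm]] small //= _.
  by rewrite cats0; have := small B (mem_head _ _); lia.
split.
- have -> : S ++ flatten (Bs1 ++ Bm ++ Bs3) = (S ++ flatten Bs1 ++ P2) ++ R1 ++ flatten Bs3.
    by rewrite !flatten_cat BmE !catA.
  exact: interval_partition_cat.
- exact: refines_cons JE ref.
- have : size (nonnil1 (flatten Bs1)) <= 1 by case: (flatten Bs1).
  rewrite size_cat in cut_size; rewrite !size_cat !size_map /= subSS subn0; lia.
- move=> I; rewrite !mem_cat => /orP[/orP[/mapP[x _ ->] | /orP[] ] | /runs[|[Bs2 B2 ->]]].
  + by left; exists x.
  + by move/mem_nonnil1->; right; exists Bs1; rewrite ?prefix_infix.
  + by case/mapP=> x _ ->; left; exists x.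
  + by left.
  + by right; exists Bs2; rewrite // (infix_trans B2) // catA suffix_infix.
Qed.

Lemma block_refinement_exists k (S : seq nat) (Bs Js : seq (seq nat)) :
  (forall B : seq nat, B \in Bs -> size B < k) -> flatten Js = S ++ flatten Bs ->
  exists Is, block_refinement k S Bs Js Is.
Proof.
elim: Js S Bs => [|J Js IH] S Bs small /= e.
  by exists [::]; split=> //; rewrite /interval_partition /= e.
case: (cat_eq_cat e) => [[u [-> JsE]] | [u [-> uE]]].
  have [Is ref] := IH u Bs small JsE.
  by exists (singletons J ++ Is); apply: block_refinement_inside.
have [Bs1 [Bm [Bs3 [P2 [R1 [BsE -> JsE BmE cut]]]]]] := flatten_split (esym uE).
have small3 (B : seq nat) : B \in Bs3 -> size B < k.
  by move=> B3; apply: small; rewrite BsE !mem_cat B3 !orbT.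
have [Is ref] := IH R1 Bs3 small3 JsE.
exists ((singletons S ++ nonnil1 (flatten Bs1) ++ singletons P2) ++ Is); rewrite BsE.
apply: (block_refinement_cut S Bs1 _ BmE cut JsE ref) => B Bm_B.
by apply: small; rewrite BsE !mem_cat Bm_B orbT.
Qed.

Lemma refine_along_blocks k (Bs Js : seq (seq nat)) :
  (forall B : seq nat, B \in Bs -> size B < k) -> interval_partition (flatten Bs) Js ->
  exists Is, [/\ interval_partition (flatten Bs) Is, refines Is Js,
    size Is <= size Js + (k - 1) * (size Js - 1) &
    forall I, I \in Is -> (exists x, I = [:: x]) \/ block_run Bs I].
Proof.
move=> small /andP[_ /eqP JsE].
by have [Is []] := block_refinement_exists (S := [::]) small JsE; exists Is.
Qed.

Definition matched (f : nat -> nat) (Ps : seq (seq nat * seq nat)) : bool :=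
  all (fun p => perm_eq (map f p.1) p.2) Ps.

Lemma perm_of_window f (A Yl Ym Yr : seq nat) : uniq (Yl ++ Ym) -> {subset map f A <= Ym} ->
  perm_of A (Yl ++ Ym ++ Yr) f = map (addn (size Yl)) (perm_of A Ym f).
Proof.
rewrite cat_uniq => /and3P[_ /hasPn Ym_notin_Yl _] sub.
rewrite /perm_of -map_comp; apply/eq_in_map => x xA /=.
have fxYm : f x \in Ym by apply/sub/map_f.
by rewrite index_cat (negPf (Ym_notin_Yl _ fxYm)) index_cat fxYm addnS.
Qed.

Lemma perm_eq_window f (A Y b : seq nat) o : {subset map f A <= Y} ->
  perm_of A Y f = map (addn o) b -> is_perm b -> o + size b <= size Y ->
  perm_eq (map f A) (take (size b) (drop o Y)).
Proof.
move=> sub pA b_perm le.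
have -> : map f A = map (nth 0 Y \o predn) (perm_of A Y f).
  by rewrite /perm_of -map_comp; apply/eq_in_map => x xA /=; rewrite nth_index ?sub ?map_f.
rewrite pA -map_comp -(map_nth_iota 0); last by lia.
have -> : iota o (size b) = map (predn \o addn o) (iota 1 (size b)).
  by rewrite -{1}(addn0 o) iotaDl (iotaDl 1 0) -map_comp; apply: eq_map => i /=; rewrite addnS.
by rewrite -map_comp perm_map // perm_map.
Qed.

Lemma perm_of_nil f (X Y : seq nat) : perm_eq (map f X) Y -> perm_of X Y f = [::] ->
  X = [::] /\ Y = [::].
Proof. by case: X => // /perm_size; case: Y. Qed.

Lemma dsum_blocks f (bs : seq (seq nat)) (X Y : seq nat) :
  uniq Y -> perm_eq (map f X) Y -> perm_of X Y f = foldr dsum [::] bs -> all is_perm bs ->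
  exists Ps, [/\ X = flatten (unzip1 Ps), Y = flatten (unzip2 Ps),
                 map size (unzip1 Ps) = map size bs & matched f Ps].
Proof.
elim: bs X Y => [|b bs IH] X Y uY XY /= pX.
  by have [-> ->] := perm_of_nil XY pX; exists [::].
case/andP=> b_perm bs_perm; set rest := foldr dsum [::] bs in pX.
have sizeX : size X = size b + size rest.
  by have := congr1 size pX; rewrite size_map /dsum size_cat size_map.
have sizeY : size Y = size X by rewrite -(perm_size XY) size_map.
have sub : {subset map f X <= Y} by move=> y; rewrite (perm_mem XY).
have XY1 : perm_eq (map f (take (size b) X)) (take (size b) Y).
  rewrite -(drop0 Y); apply: perm_eq_window; last by rewrite sizeY sizeX leq_addr.
  - by move=> y; rewrite map_take => /mem_take/sub.
  - by rewrite /perm_of map_take -/(perm_of X Y f) pX take_size_cat // (eq_map add0n) map_id.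
  - exact: b_perm.
have XY2 : perm_eq (map f (drop (size b) X)) (drop (size b) Y).
  by apply: perm_eq_catr XY1; rewrite -map_cat !cat_take_drop.
have pX2 : perm_of (drop (size b) X) (drop (size b) Y) f = rest.
  have Yb : size (take (size b) Y) = size b by rewrite size_takel // sizeY sizeX leq_addr.
  have := perm_of_window (f := f) (A := drop (size b) X) (Yl := take (size b) Y)
    (Ym := drop (size b) Y) [::].
  rewrite cats0 cat_take_drop Yb => /(_ uY) shift.
  apply: (inj_map (@addnI (size b))); rewrite -shift; last by move=> y; rewrite (perm_mem XY2).
  by rewrite /perm_of map_drop -/(perm_of X Y f) pX drop_size_cat.
have [|Ps [X2E Y2E sizesE matchedE]] := IH _ _ _ XY2 pX2 bs_perm; first exact: drop_uniq.
exists ((take (size b) X, take (size b) Y) :: Ps); split=> /=.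
- by rewrite -X2E cat_take_drop.
- by rewrite -Y2E cat_take_drop.
- by rewrite sizesE size_takel // sizeX leq_addr.
- by rewrite /matched /= XY1.
Qed.

Lemma ssum_blocks f (bs : seq (seq nat)) (X Y : seq nat) :
  uniq Y -> perm_eq (map f X) Y -> perm_of X Y f = foldr ssum [::] bs -> all is_perm bs ->
  exists Ps, [/\ X = flatten (unzip1 Ps), Y = flatten (unzip2 (rev Ps)),
                 map size (unzip1 Ps) = map size bs & matched f Ps].
Proof.
elim: bs X Y => [|b bs IH] X Y uY XY /= pX.
  by have [-> ->] := perm_of_nil XY pX; exists [::].
case/andP=> b_perm bs_perm; set rest := foldr ssum [::] bs in pX.
have sizeX : size X = size b + size rest.
  by have := congr1 size pX; rewrite size_map /ssum size_cat size_map.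
have sizeY : size Y = size rest + size b by rewrite -(perm_size XY) size_map sizeX addnC.
have sub : {subset map f X <= Y} by move=> y; rewrite (perm_mem XY).
have XY1 : perm_eq (map f (take (size b) X)) (drop (size rest) Y).
  rewrite -[drop _ Y](take_oversize (n := size b)) ?size_drop ?sizeY ?addKn //.
  apply: perm_eq_window; last by rewrite sizeY.
  - by move=> y; rewrite map_take => /mem_take/sub.
  - by rewrite /perm_of map_take -/(perm_of X Y f) pX take_size_cat // size_map.
  - exact: b_perm.
have XY2 : perm_eq (map f (drop (size b) X)) (take (size rest) Y).
  apply: perm_eq_catr XY1; rewrite -map_cat cat_take_drop.
  by apply: perm_trans XY _; rewrite -{1}(cat_take_drop (size rest) Y) perm_catC.
have pX2 : perm_of (drop (size b) X) (take (size rest) Y) f = rest.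
  have := perm_of_window (f := f) (A := drop (size b) X) (Yl := [::]) (Ym := take (size rest) Y)
    (drop (size rest) Y).
  rewrite cat_take_drop (eq_map add0n) map_id => /(_ (take_uniq _ uY)) shift.
  rewrite -shift; last by move=> y; rewrite (perm_mem XY2).
  by rewrite /perm_of map_drop -/(perm_of X Y f) pX drop_size_cat // size_map.
have [|Ps [X2E Y2E sizesE matchedE]] := IH _ _ _ XY2 pX2 bs_perm; first exact: take_uniq.
exists ((take (size b) X, drop (size rest) Y) :: Ps); split=> /=.
- by rewrite -X2E cat_take_drop.
- by rewrite rev_cons -cats1 /unzip2 map_cat flatten_cat -/(unzip2 _) -Y2E /= cats0 cat_take_drop.
- by rewrite sizesE size_takel // sizeX leq_addr.
- by rewrite /matched /= XY1.
Qed.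

Lemma matched_flatten f (Ps : seq (seq nat * seq nat)) :
  matched f Ps -> perm_eq (map f (flatten (unzip1 Ps))) (flatten (unzip2 Ps)).
Proof.
by elim: Ps => [|[A B] Ps IH] //= /andP[AB /IH]; rewrite map_cat; apply: perm_cat.
Qed.

Lemma small_blocks k (As bs : seq (seq nat)) : map size As = map size bs ->
  \max_(b <- bs) size b < k -> forall A : seq nat, A \in As -> size A < k.
Proof.
move=> sizes bs_k A /(map_f size); rewrite sizes => /mapP[b bs_b ->].
exact: leq_ltn_trans (leq_bigmax_seq _ bs_b isT) bs_k.
Qed.

Section MatchedBlocks.

Variables (f : nat -> nat) (k : nat) (X Y : seq nat) (Ps Qs : seq (seq nat * seq nat)).
Hypothesis XY : perm_eq (map f X) Y.
Hypothesis XE : X = flatten (unzip1 Ps).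
Hypothesis YE : Y = flatten (unzip2 Qs).
Hypothesis QsE : Qs = Ps \/ Qs = rev Ps.
Hypothesis matched_Ps : matched f Ps.
Hypothesis small_Ps : forall A : seq nat, A \in unzip1 Ps -> size A < k.

Lemma run_PQ Ps2 : infix Ps2 Ps -> exists2 Qs2, infix Qs2 Qs & perm_eq Ps2 Qs2.
Proof.
case: QsE => -> P2; first by exists Ps2.
by exists (rev Ps2); rewrite ?infix_rev // perm_sym perm_rev.
Qed.

Lemma run_QP Qs2 : infix Qs2 Qs -> exists2 Ps2, infix Ps2 Ps & perm_eq Ps2 Qs2.
Proof.
case: QsE => -> Q2; first by exists Qs2.
by exists (rev Qs2); rewrite ?perm_rev // infix_revLR.
Qed.

Lemma small_Qs (B : seq nat) : B \in unzip2 Qs -> size B < k.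
Proof.
case/mapP=> q Qs_q ->; have Ps_q : q \in Ps by case: QsE Qs_q => ->; rewrite ?mem_rev.
by rewrite -(perm_size (allP matched_Ps q Ps_q)) size_map; apply/small_Ps/map_f.
Qed.

Lemma matched_run Ps2 Qs2 : infix Ps2 Ps -> perm_eq Ps2 Qs2 ->
  perm_eq (map f (flatten (unzip1 Ps2))) (flatten (unzip2 Qs2)).
Proof.
move=> P2 PQ; apply: perm_trans (_ : perm_eq _ (flatten (unzip2 Ps2))) _.
  apply: matched_flatten; apply/allP=> p /(mem_infix P2) Ps_p; exact: (allP matched_Ps).
by apply/perm_flatten/perm_map.
Qed.

Lemma image_run_interval (I : seq nat) :
  block_run (unzip1 Ps) I -> I != [::] -> is_interval Y (map f I).
Proof.
case=> _ /infix_mapP[Ps2 P2 ->] -> I0; have [Qs2 Q2 PQ] := run_PQ P2.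
have IQ := matched_run P2 PQ.
apply: (is_interval_perm IQ); apply: is_interval_infix.
  by rewrite YE; apply/infix_flatten/infix_map.
by rewrite -size_eq0 -(perm_size IQ) size_map size_eq0.
Qed.

Lemma preimage_run_interval (I : seq nat) : block_run (unzip2 Qs) I -> I != [::] ->
  exists A, is_interval X A /\ perm_eq (map f A) I.
Proof.
case=> _ /infix_mapP[Qs2 Q2 ->] -> I0; have [Ps2 P2 PQ] := run_QP Q2.
have AI := matched_run P2 PQ.
exists (flatten (unzip1 Ps2)); split=> //; apply: is_interval_infix.
  by rewrite XE; apply/infix_flatten/infix_map.
by rewrite -size_eq0 -(size_map f) (perm_size AI) size_eq0.
Qed.

Lemma refine_domain (Js : seq (seq nat)) : interval_partition X Js ->
  exists Is, [/\ interval_partition X Is, refines Is Js,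
                 size Is <= size Js + (k - 1) * (size Js - 1) &
                 forall I, I \in Is -> is_interval Y (map f I)].
Proof.
rewrite {1}XE => /(refine_along_blocks small_Ps)[Is [part ref le runs]].
rewrite -XE in part; exists Is; split=> // I Is_I.
have I0 := interval_partition_nonnil part Is_I.
case: (runs I Is_I) => [[x Ix] | ]; last by move/image_run_interval; apply.
have X_x : x \in X by apply: interval_partition_mem part Is_I _; rewrite Ix mem_head.
by rewrite Ix; apply: is_interval_infix => //; rewrite /= infix1s -(perm_mem XY) map_f.
Qed.

Lemma refine_codomain (Js : seq (seq nat)) : interval_partition Y Js ->
  exists Is, [/\ interval_partition Y Is, refines Is Js,
                 size Is <= size Js + (k - 1) * (size Js - 1) &
                 forall I, I \in Is -> exists A, is_interval X A /\ perm_eq (map f A) I].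
Proof.
rewrite {1}YE => /(refine_along_blocks small_Qs)[Is [part ref le runs]].
rewrite -YE in part; exists Is; split=> // I Is_I.
have I0 := interval_partition_nonnil part Is_I.
case: (runs I Is_I) => [[y Iy] | ]; last by move/preimage_run_interval; apply.
have Y_y : y \in Y by apply: interval_partition_mem part Is_I _; rewrite Iy mem_head.
rewrite Iy; move: Y_y; rewrite -(perm_mem XY) => /mapP[x X_x ->].
by exists [:: x]; split=> //; apply: is_interval_infix; rewrite ?infix1s.
Qed.

Lemma refine_matched_blocks :
  (forall Js, interval_partition X Js ->
     exists Is, [/\ interval_partition X Is, refines Is Js,
                    size Is <= size Js + (k - 1) * (size Js - 1) &
                    forall I, I \in Is -> is_interval Y (map f I)]) /\
  (forall Js, interval_partition Y Js ->
     exists Is, [/\ interval_partition Y Is, refines Is Js,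
                    size Is <= size Js + (k - 1) * (size Js - 1) &
                    forall I, I \in Is ->
                      exists A, is_interval X A /\ perm_eq (map f A) I]).
Proof. by split; [exact: refine_domain | exact: refine_codomain]. Qed.

End MatchedBlocks.

Theorem mainTheorem4 (X Y : seq nat) (f : nat -> nat) (k : nat) :
  sorted ltn X -> sorted ltn Y -> size X = size Y ->
  {in X &, injective f} -> perm_eq (map f X) Y ->
  in_Hplus k (perm_of X Y f) \/ in_Hminus k (perm_of X Y f) ->
  (forall Js, interval_partition X Js ->
     exists Is, [/\ interval_partition X Is, refines Is Js,
                    size Is <= size Js + (k - 1) * (size Js - 1) &
                    forall I, I \in Is -> is_interval Y (map f I)]) /\
  (forall Js, interval_partition Y Js ->
     exists Is, [/\ interval_partition Y Is, refines Is Js,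
                    size Is <= size Js + (k - 1) * (size Js - 1) &
                    forall I, I \in Is ->
                      exists A, is_interval X A /\ perm_eq (map f A) I]).
Proof.
move=> _ sorted_Y _ _ XY H_k; have uniq_Y := sorted_uniq ltn_trans ltnn sorted_Y.
case: H_k => [[bs [[bs_perm _ _ pX] bs_k]] | [bs [[bs_perm _ _ pX] bs_k]]].
  have [Ps [XE YE sizes matched_Ps]] := dsum_blocks uniq_Y XY pX bs_perm.
  exact: refine_matched_blocks XY XE YE (or_introl erefl) matched_Ps (small_blocks sizes bs_k).
have [Ps [XE YE sizes matched_Ps]] := ssum_blocks uniq_Y XY pX bs_perm.
exact: refine_matched_blocks XY XE YE (or_intror erefl) matched_Ps (small_blocks sizes bs_k).
Qed.
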